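(* Let $\gamma\in(0,1)$, and let $\hat c^1,\hat c^2,\dots$ be independent, identically distributed real random variables with mean $c$ and variance $\sigma^2<\infty$. Let $\alpha_0,\alpha_1,\dots$ be deterministic real numbers. Define $\bar v^0=0$ and, for $n\ge1$, $$\hat v^n=\hat c^n+\gamma\bar v^{n-1},\qquad \bar v^n=(1-\alpha_{n-1})\bar v^{n-1}+\alpha_{n-1}\hat v^n.$$ Define $\delta^1=\alpha_0$, $\lambda^1=\alpha_0^2$ and, for $n>1$, $$\delta^n=\alpha_{n-1}+\big(1-(1-\gamma)\alpha_{n-1}\big)\delta^{n-1},\qquad \lambda^n=\alpha_{n-1}^2+\big(1-(1-\gamma)\alpha_{n-1}\big)^2\lambda^{n-1}.$$ Then for all $n\ge1$, $\mathbb{E}(\bar v^n)=\delta^n c$ and $\mathrm{Var}(\bar v^n)=\lambda^n\sigma^2$. *)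

From HB Require Import structures.
From mathcomp Require Import all_boot all_order all_algebra.
From mathcomp Require Import all_classical all_reals all_analysis.
Set Implicit Arguments. Unset Strict Implicit. Unset Printing Implicit Defensive.
Import Order.TTheory GRing.Theory Num.Theory.
Local Open Scope classical_set_scope.
Local Open Scope ring_scope.

Definition mutually_independent d (T : measurableType d) (R : realType)
  (P : probability T R) (I : set nat) (X : nat -> T -> R) : Prop :=
  forall (s : seq nat) (B : nat -> set R),
    uniq s -> (forall i, i \in s -> I i) ->
    (forall i, i \in s -> measurable (B i)) ->
    P (\bigcap_(i in [set i | i \in s]) (X i @^-1` B i)) =
    (\big[*%E/1%E]_(i <- s) P (X i @^-1` B i))%E.

Definition identically_distributed d (T : measurableType d) (R : realType)
  (P : probability T R) (I : set nat) (X : nat -> {RV P >-> R}) : Prop :=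
  forall i j, I i -> I j -> distribution P (X i) = distribution P (X j).

Section iterates.
Variables (d : measure_display) (T : measurableType d) (R : realType).
Variables (gamma : R) (alpha : nat -> R) (chat : nat -> T -> R).

Fixpoint vbar (n : nat) : T -> R :=
  match n with
  | 0 => fun _ => 0
  | m.+1 => fun w =>
      (1 - alpha m) * vbar m w + alpha m * (chat m.+1 w + gamma * vbar m w)
  end.

Definition vhat (n : nat) : T -> R :=
  fun w => chat n w + gamma * vbar n.-1 w.

(* delta^1 = alpha_0, delta^n = alpha_{n-1} + (1-(1-gamma)alpha_{n-1}) delta^{n-1};
   the value at 0 is irrelevant (set to 0). *)
Fixpoint delta (n : nat) : R :=
  match n with
  | 0 => 0
  | m.+1 => match m with
            | 0 => alpha 0
            | _ => alpha m + (1 - (1 - gamma) * alpha m) * delta m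
            end
  end.

Fixpoint lambda (n : nat) : R :=
  match n with
  | 0 => 0
  | m.+1 => match m with
            | 0 => alpha 0 ^+ 2
            | _ => alpha m ^+ 2 + (1 - (1 - gamma) * alpha m) ^+ 2 * lambda m
            end
  end.

End iterates.

Arguments mutually_independent {d T R} P I X.
Arguments identically_distributed {d T R} P I X.

(* Write a = 1 - (1 - gamma) alpha. Then vbar^(n+1) = a_n vbar^n + alpha_n chat^(n+1),
   and vbar^n is a linear combination of chat^1, ..., chat^n. Independence makes
   E[X Y] = E[X] E[Y] (Fubini on the product of the two laws), so chat^(n+1) is
   uncorrelated with each earlier chat^k and hence with vbar^n. Linearity of the
   expectation and bilinearity of the covariance then turn the recursion for vbar
   into the recursions defining delta and lambda. *)
From HB Require Import structures.
From mathcomp Require Import all_boot all_order all_algebra.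
From mathcomp Require Import all_classical all_reals all_analysis.
From mathcomp Require Import measurable_realfun ring.
Set Implicit Arguments. Unset Strict Implicit. Unset Printing Implicit Defensive.
Import Order.TTheory GRing.Theory Num.Theory.
Local Open Scope classical_set_scope.
Local Open Scope ring_scope.

Section independence.
Local Open Scope ereal_scope.
Context d (T : measurableType d) (R : realType) (P : probability T R).

Definition independent_rv (X Y : T -> R) : Prop :=
  forall A B, measurable A -> measurable B ->
    P (X @^-1` A `&` Y @^-1` B) = P (X @^-1` A) * P (Y @^-1` B).

Lemma mutually_independent_pair (I : set nat) (X : nat -> T -> R) j k :
  mutually_independent P I X -> I j -> I k -> j != k ->
  independent_rv (X j) (X k).
Proof.
move=> indep Ij Ik jk A B mA mB.
have kjF : (k == j) = false by rewrite eq_sym; exact/negbTE.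
have := indep [:: j; k] (fun i => if i == j then A else B).
rewrite /= !big_cons big_nil eqxx kjF mule1 => <- //.
- congr (P _); apply/seteqP; split => [w [XA XB] i /=|w XAB].
    by rewrite !inE => /orP[] /eqP ->; rewrite ?eqxx ?kjF.
  split; first by have := XAB j; rewrite /= eqxx; apply; rewrite mem_head.
  by have := XAB k; rewrite /= kjF; apply; rewrite !inE eqxx orbT.
- by rewrite andbT mem_seq1.
- by move=> i; rewrite !inE => /orP[] /eqP ->.
- by move=> i _; case: (i == j).
Qed.

Lemma integrable_distribution_id (V : {mfun T >-> R}) :
  (V : T -> R) \in Lfun P 1 -> (distribution P V).-integrable setT EFin.
Proof.
move=> /Lfun1_integrable iV.
by apply: integrable_pushforward => //; exact/measurable_EFinP.
Qed.

Lemma integral_distribution_id (V : {mfun T >-> R}) :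
  (V : T -> R) \in Lfun P 1 -> \int[distribution P V]_y y%:E = 'E_P[V].
Proof.
move=> /Lfun1_integrable iV.
rewrite unlock (@integral_distribution _ _ _ _ _ P V (EFin \o id)) //.
exact/measurable_EFinP.
Qed.

Section product_rule.
Variables (X Y : {mfun T >-> R}).
Hypothesis XY_indep : independent_rv X Y.

Let XY (w : T) : (R * R)%type := (X w, Y w).
Let XY_measurable : measurable_fun setT XY.
Proof. exact: measurable_fun_pair. Qed.
HB.instance Definition _ := isMeasurableFun.Build _ _ _ _ XY XY_measurable.

Lemma distribution_pair_indep A : measurable A ->
  (distribution P X \x distribution P Y) A = distribution P XY A.
Proof. by apply: product_measure_unique => B C mB mC; rewrite /= -XY_indep. Qed.

Lemma expectationM_indep : (X : T -> R) \in Lfun P 1 ->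
  (Y : T -> R) \in Lfun P 1 -> (X \* Y)%R \in Lfun P 1 ->
  'E_P[X \* Y] = 'E_P[X] * 'E_P[Y].
Proof.
move=> X1 Y1 XY1.
pose mul (z : (R * R)%type) : \bar R := (z.1 * z.2)%:E.
have mul_measurable : measurable_fun [set: (R * R)%type] mul.
  apply/measurable_EFinP; apply: measurable_funM.
    exact: measurable_fst.
  exact: measurable_snd.
have mul_int_P : P.-integrable setT (mul \o XY) by exact/Lfun1_integrable.
have mul_int_XY : (distribution P XY).-integrable setT mul.
  exact: (integrable_pushforward XY_measurable mul_measurable mul_int_P).
have law_eq : forall A, measurable A -> A `<=` setT ->
    (distribution P X \x distribution P Y) A = distribution P XY A.
  by move=> A mA _; exact: distribution_pair_indep.
have mul_int : (distribution P X \x distribution P Y).-integrable setT mul.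
  apply/integrableP; split => //; rewrite (eq_measure_integral _ law_eq).
  by case/integrableP: mul_int_XY.
have -> : 'E_P[X \* Y] = \int[distribution P X \x distribution P Y]_z mul z.
  rewrite (eq_measure_integral _ law_eq).
  by rewrite (@integral_distribution _ _ _ _ _ P XY mul) // unlock.
rewrite -integral12_prod_meas1 // /fubini_F.
have EYfin : 'E_P[Y] = (fine 'E_P[Y])%:E by rewrite fineK // expectation_fin_num.
transitivity (\int[distribution P X]_x (x%:E * 'E_P[Y])).
  apply: eq_integral => x _; rewrite /mul /= -integral_distribution_id //.
  under eq_integral do rewrite EFinM.
  by rewrite integralZl //; exact: integrable_distribution_id.
rewrite EYfin integralZr //; last exact: integrable_distribution_id.
by rewrite integral_distribution_id.
Qed.

End product_rule.

Lemma covariance_indep (X Y : {mfun T >-> R}) : independent_rv X Y ->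
  (X : T -> R) \in Lfun P 2%:E -> (Y : T -> R) \in Lfun P 2%:E ->
  covariance P X Y = 0.
Proof.
move=> XY_indep X2 Y2.
have Pfin : P setT \is a fin_num := fin_num_measure P _ measurableT.
have X1 := Lfun_subset12 Pfin X2; have Y1 := Lfun_subset12 Pfin Y2.
have XY1 := Lfun2_mul_Lfun1 X2 Y2.
rewrite covarianceE // expectationM_indep // subee //.
by rewrite fin_numM // expectation_fin_num.
Qed.

End independence.

(* With the junk value [delta 0 = lambda 0 = 0] the recursions also hold at [m = 0]. *)
Lemma deltaS (R : realType) (gamma : R) (alpha : nat -> R) m :
  delta gamma alpha m.+1 =
  alpha m + (1 - (1 - gamma) * alpha m) * delta gamma alpha m.
Proof. by case: m => [|m] //=; rewrite mulr0 addr0. Qed.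

Lemma lambdaS (R : realType) (gamma : R) (alpha : nat -> R) m :
  lambda gamma alpha m.+1 =
  alpha m ^+ 2 + (1 - (1 - gamma) * alpha m) ^+ 2 * lambda gamma alpha m.
Proof. by case: m => [|m] //=; rewrite mulr0 addr0. Qed.

Section uncorrelated_iterates.
Context d (T : measurableType d) (R : realType) (P : probability T R).
Variables (gamma : R) (alpha : nat -> R) (X : nat -> T -> R) (c sigma : R).
Hypothesis X2 : forall k, (0 < k)%N -> X k \in Lfun P 2%:E.

Local Notation V := (vbar gamma alpha X).

Lemma vbar0 : V 0 = cst 0. Proof. by []. Qed.

Lemma vbarS m :
  V m.+1 = ((1 - (1 - gamma) * alpha m) \o* V m \+ alpha m \o* X m.+1)%R.
Proof. by apply/funext => w /=; ring. Qed.

Let Pfin : P setT \is a fin_num := fin_num_measure P _ measurableT.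

Let X1 k : (0 < k)%N -> X k \in Lfun P 1.
Proof. by move=> k0; exact/(Lfun_subset12 Pfin)/X2. Qed.

Lemma vbar_Lfun2 m : V m \in Lfun P 2%:E.
Proof.
elim: m => [|m IH]; first by rewrite vbar0; exact: Lfun_cst.
rewrite vbarS; apply: rpredD; first by rewrite lee1n.
  by move=> ?; apply: Lfun_scale; rewrite ?ler1n.
by move=> ?; apply: Lfun_scale; [rewrite ler1n | exact: X2].
Qed.

Let V1 m : V m \in Lfun P 1.
Proof. exact/(Lfun_subset12 Pfin)/vbar_Lfun2. Qed.

Lemma expectation_vbar :
  (forall k, (0 < k)%N -> ('E_P[X k] = c%:E)%E) ->
  forall m, ('E_P[V m] = (delta gamma alpha m * c)%:E)%E.
Proof.
move=> EX; elim=> [|m IH]; first by rewrite vbar0 expectation_cst mul0r.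
rewrite vbarS expectationD ?Lfun_scale ?X1 //.
rewrite !expectationZl ?X1 // IH EX // deltaS -!EFinM -EFinD.
by congr (_%:E); ring.
Qed.

Hypothesis X_uncorrelated : forall j k, (0 < j)%N -> (0 < k)%N -> j != k ->
  covariance P (X j) (X k) = 0%E.

Lemma covariance_vbar m k : (m < k)%N -> covariance P (V m) (X k) = 0%E.
Proof.
elim: m => [|m IH] mk; first by rewrite vbar0 covariance_cst_l.
have k0 : (0 < k)%N by apply: leq_trans mk.
rewrite vbarS covarianceDl ?Lfun_scale ?vbar_Lfun2 ?X2 ?ler1n //.
rewrite !covarianceZl ?X1 ?Lfun2_mul_Lfun1 ?vbar_Lfun2 ?X2 //.
by rewrite IH ?(ltnW mk) // X_uncorrelated // ?(ltn_eqF mk) // !mule0 adde0.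
Qed.

Lemma variance_vbar :
  (forall k, (0 < k)%N -> variance P (X k) = (sigma ^+ 2)%:E) ->
  forall m, variance P (V m) = (lambda gamma alpha m * sigma ^+ 2)%:E.
Proof.
move=> VX; elim=> [|m IH]; first by rewrite vbar0 variance_cst mul0r.
rewrite vbarS varianceD ?Lfun_scale ?vbar_Lfun2 ?X2 ?ler1n //.
rewrite !varianceZ ?vbar_Lfun2 ?X2 // IH VX //.
rewrite covarianceZl ?Lfun_scale ?X1 ?Lfun2_mul_Lfun1 ?Lfun_scale ?vbar_Lfun2 ?X2 ?ler1n //.
rewrite covarianceZr ?X1 ?Lfun2_mul_Lfun1 ?vbar_Lfun2 ?X2 //.
rewrite covariance_vbar // !mule0 adde0 -!EFinM -EFinD lambdaS.
by congr (_%:E); ring.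
Qed.

End uncorrelated_iterates.

Theorem proposition1 (d : measure_display) (T : measurableType d) (R : realType)
  (P : probability T R) (gamma : R) (chat : nat -> {RV P >-> R})
  (c sigma : R) (alpha : nat -> R) :
  0 < gamma < 1 ->
  mutually_independent P [set n | (0 < n)%N] (fun n => chat n : T -> R) ->
  identically_distributed P [set n | (0 < n)%N] chat ->
  (forall n, (0 < n)%N -> (chat n : T -> R) \in Lfun P 2%:E) ->
  (forall n, (0 < n)%N -> ('E_P[chat n] = c%:E)%E) ->
  (forall n, (0 < n)%N -> variance P (chat n) = (sigma ^+ 2)%:E) ->
  forall n, (0 < n)%N ->
    ('E_P[vbar gamma alpha (fun k => chat k : T -> R) n]
      = (delta gamma alpha n * c)%:E)%E /\
    variance P (vbar gamma alpha (fun k => chat k : T -> R) n)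
      = (lambda gamma alpha n * sigma ^+ 2)%:E.
Proof.
move=> _ chat_indep _ chat2 Echat Vchat n _.
have chat_uncorrelated j k : (0 < j)%N -> (0 < k)%N -> j != k ->
    covariance P (chat j) (chat k) = 0%E.
  move=> j0 k0 jk; apply: covariance_indep; rewrite ?chat2 //.
  exact: (mutually_independent_pair chat_indep j0 k0 jk).
split; first exact: expectation_vbar.
exact: variance_vbar.
Qed.
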